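(* Let $\mathcal{SB}=\langle\mathcal{L},A,\to,\text{supp}\rangle$ be an SBAF and $S\subseteq Sent(A)$ a compatible set of sentences. Then $Arg_w(S)$ is admissible.
   Context: A language is a triple $\mathcal{L}=\langle L,\overline{\cdot},n\rangle$: $L$ is a nonempty set of sentences; $\overline{\cdot}$ assigns to each $s\in L$ a set $\overline{s}\subseteq L$ of sentences incompatible with $s$, and is symmetric; $n$ is a partial naming function assigning to an argument $a$ a sentence $n(a)\in L$ (if undefined, put $\overline{n(a)}:=\emptyset$), with $\overline{n(\langle\{t\},t\rangle)}=\emptyset$. An argument is a pair $a=\langle Prem(a),Conc(a)\rangle$ with $Prem(a)$ a nonempty finite subset of $L$ and $Conc(a)\in L$; $Sent(a):=Prem(a)\cup\{Conc(a)\}$, $Sent(E):=\bigcup_{a\in E}Sent(a)$. Argument $a$ attacks $b$ ($a\to b$) if $Conc(a)\in\overline{s}$ for some $s\in Sent(b)$ or $Conc(a)\in\overline{n(b)}$. An SBAF is $\langle\mathcal{L},A,\to,\text{supp}\rangle$ with $A$ a finite set of arguments. For $E\subseteq A$: $E$ defends $a\in A$ if for every $b\in A$ with $b\to a$ some element of $E$ attacks $b$; $E$ is conflict-free if no $a,b\in E$ with $a\to b$; admissible if conflict-free and defends all its elements. $S$ is compatible if no $s,t\in S$ with $s\in\overline t$. $Arg_s(S):=\{a\in A\mid Prem(a)\subseteq S\text{ and }\overline{n(a)}\cap S=\emptyset\}$; $R^S(E):=\{a\in A\mid a\in Arg_s(S)\text{ and }E\text{ defends }a\}$. For compatible $S$,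 $Init(S)$ is the largest admissible subset of $\{a\in A\mid Sent(a)\subseteq S\text{ and }\overline{n(a)}\cap S=\emptyset\}$, and the weak argument set $Arg_w(S)$ is the $\subseteq$-least set $E\subseteq A$ with $Init(S)\subseteq E$ and $R^S(E)=E$. *)

From HB Require Import structures.
From mathcomp Require Import all_boot finmap.
Set Implicit Arguments. Unset Strict Implicit. Unset Printing Implicit Defensive.
Local Open Scope fset_scope.

(* Sentences are the elements of a choiceType T (L := all of T).
   An argument is a pair <Prem, Conc> with Prem a finite set of sentences. *)
Definition argument (T : choiceType) := ({fset T} * T)%type.

Section SBAF.
Variables (T : choiceType).
(* ov s t  means  t \in \overline{s} *)
Variable ov : T -> T -> Prop.
Variable n : argument T -> option T.

Definition Prem (a : argument T) : {fset T} := a.1.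
Definition Conc (a : argument T) : T := a.2.
Definition in_Sent (a : argument T) (s : T) : Prop := s \in Prem a \/ s = Conc a.

(* t \in \overline{n(a)}, with \overline{n(a)} = empty when n(a) is undefined *)
Definition in_ov_name (a : argument T) (t : T) : Prop :=
  match n a with Some u => ov u t | None => False end.

Definition is_language : Prop :=
  (exists t : T, True) /\
  (forall s t, ov s t -> ov t s) /\
  (forall t u, ~ in_ov_name ([fset t], t) u).

Definition is_argument (a : argument T) : Prop := Prem a != fset0.

Definition attacks (a b : argument T) : Prop :=
  (exists s, in_Sent b s /\ ov s (Conc a)) \/ in_ov_name b (Conc a).

Variable A : {fset argument T}.

Definition in_SentA (s : T) : Prop := exists2 a, a \in A & in_Sent a s.

Definition defends (E : argument T -> Prop) (a : argument T) : Prop :=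
  forall b, b \in A -> attacks b a -> exists c, E c /\ attacks c b.

Definition conflict_free (E : argument T -> Prop) : Prop :=
  forall a b, E a -> E b -> ~ attacks a b.

Definition admissible (E : argument T -> Prop) : Prop :=
  conflict_free E /\ forall a, E a -> defends E a.

Definition compatible (S : T -> Prop) : Prop :=
  forall s t, S s -> S t -> ~ ov t s.

Definition Arg_s (S : T -> Prop) (a : argument T) : Prop :=
  a \in A /\ (forall s, s \in Prem a -> S s) /\ (forall t, in_ov_name a t -> ~ S t).

Definition R_S (S : T -> Prop) (E : argument T -> Prop) (a : argument T) : Prop :=
  Arg_s S a /\ defends E a.

Definition init_cand (S : T -> Prop) (a : argument T) : Prop :=
  a \in A /\ (forall s, in_Sent a s -> S s) /\ (forall t, in_ov_name a t -> ~ S t).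

(* Init(S): the largest admissible subset of init_cand S, i.e. the union of
   all admissible subsets of it (for compatible S this union is admissible,
   hence the largest one). *)
Definition Init (S : T -> Prop) (a : argument T) : Prop :=
  exists E : argument T -> Prop,
    [/\ forall b, E b -> init_cand S b, admissible E & E a].

(* Arg_w(S): the least E with Init(S) <= E and R^S(E) = E, i.e. the
   intersection of all such E. *)
Definition Arg_w (S : T -> Prop) (a : argument T) : Prop :=
  forall E : argument T -> Prop,
    (forall b, Init S b -> E b) -> (forall b, R_S S E b <-> E b) -> E a.

End SBAF.

From HB Require Import structures.
From mathcomp Require Import all_boot finmap.
From Stdlib Require Import Classical_Prop.
Set Implicit Arguments. Unset Strict Implicit.
Local Open Scope fset_scope.

(* Arg_w(S) is the union of the increasing chain Init(S), R^S(Init(S)),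
   R^S(R^S(Init(S))), ...  Every set of the chain is conflict-free: Init(S)
   because its arguments are built from the compatible set S, and each later
   stage because an attack between two defended arguments would yield, by
   defending twice, an attack inside the previous stage.  Since A is finite,
   an argument defended by the union is already defended by some stage, so
   the union is a fixpoint of R^S; hence it is Arg_w(S) and it defends each
   of its members. *)

Lemma chain_common_bound (X : eqType) (P : X -> nat -> Prop) (s : seq X) :
  (forall x i j, i <= j -> P x i -> P x j) ->
  (forall x, x \in s -> exists k, P x k) ->
  exists k, forall x, x \in s -> P x k.
Proof.
move=> Pup; elim: s => [|x s IH] Hs; first by exists 0.
have [k Hk] := IH (fun y ys => Hs y (mem_behead (s := x :: s) ys)).
have [m Hm] := Hs x (mem_head x s).
exists (maxn k m) => y; rewrite in_cons => /predU1P [->|ys].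
- exact: Pup (leq_maxr k m) Hm.
- exact: Pup (leq_maxl k m) (Hk y ys).
Qed.

Section Iteration.
Variables (X : Type) (f : (X -> Prop) -> X -> Prop) (E0 : X -> Prop).
Hypothesis f_mono : forall E1 E2 x, (forall y, E1 y -> E2 y) ->
  f E1 x -> f E2 x.
Hypothesis E0_sub_f : forall x, E0 x -> f E0 x.

Lemma iter_sub_succ k x : iter k f E0 x -> iter k.+1 f E0 x.
Proof.
elim: k x => [|k IH] x; first exact: E0_sub_f.
by rewrite !iterS; apply: f_mono.
Qed.

Lemma iter_mono i j x : i <= j -> iter i f E0 x -> iter j f E0 x.
Proof.
move=> /subnKC <-; elim: (j - i) => [|d IH]; first by rewrite addn0.
by rewrite addnS => Hx; apply: iter_sub_succ; apply: IH.
Qed.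

End Iteration.

Section SBAF.
Variables (T : choiceType) (ov : T -> T -> Prop) (n : argument T -> option T)
  (A : {fset argument T}).

Local Notation defends := (defends ov n A).
Local Notation attacks := (attacks ov n).
Local Notation conflict_free := (conflict_free ov n).

Lemma sub_defends (E1 E2 : argument T -> Prop) a :
  (forall x, E1 x -> E2 x) -> defends E1 a -> defends E2 a.
Proof. by move=> E12 D b bA ba; have [c [E1c cb]] := D b bA ba; exists c; auto. Qed.

Lemma defends_chain_union (E : nat -> argument T -> Prop) a :
  (forall i j x, i <= j -> E i x -> E j x) ->
  defends (fun x => exists k, E k x) a -> exists k, defends (E k) a.
Proof.
move=> Emono D.
pose P b k := attacks b a -> exists c, E k c /\ attacks c b.
have Pup b i j : i <= j -> P b i -> P b j.
  move=> ij Pbi ba; have [c [Eic cb]] := Pbi ba.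
  by exists c; split=> //; exact: Emono Eic.
have [k Hk] : exists k, forall b, b \in A -> P b k.
  apply: chain_common_bound => // b bA.
  have [ba|nba] := classic (attacks b a); last by exists 0 => /nba.
  by have [c [[k Ekc] cb]] := D b bA ba; exists k => _; exists c.
by exists k.
Qed.

Lemma conflict_free_chain_union (E : nat -> argument T -> Prop) :
  (forall i j x, i <= j -> E i x -> E j x) -> (forall k, conflict_free (E k)) ->
  conflict_free (fun x => exists k, E k x).
Proof.
move=> Emono cfE a b [i Eia] [j Ejb].
apply: (cfE (maxn i j)).
- exact: Emono (leq_maxl i j) Eia.
- exact: Emono (leq_maxr i j) Ejb.
Qed.

Section Sentences.
Variable S : T -> Prop.

Local Notation R_S := (R_S ov n A S).
Local Notation Init := (Init ov n A S).

Lemma R_S_sub (E1 E2 : argument T -> Prop) a :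
  (forall x, E1 x -> E2 x) -> R_S E1 a -> R_S E2 a.
Proof. by move=> E12 [Sa Da]; split=> //; exact: sub_defends Da. Qed.

Lemma conflict_free_R_S (E : argument T -> Prop) :
  (forall x, E x -> x \in A) -> conflict_free E -> conflict_free (R_S E).
Proof.
move=> EA cfE a b [[aA _] Da] [_ Db] ab.
have [c [Ec ca]] := Db a aA ab.
have [d [Ed dc]] := Da c (EA c Ec) ca.
exact: cfE Ed Ec dc.
Qed.

Lemma init_cand_conflict_free :
  compatible ov S -> conflict_free (init_cand ov n A S).
Proof.
move=> compS a b [_ [Sa _]] [_ [Sb nSb]] [[s [bs ov_s]]|nb].
- by apply: (compS _ _ (Sa _ (or_intror erefl)) (Sb s bs)).
- by apply: (nSb _ nb); apply: Sa; right.
Qed.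

Lemma Init_sub_init_cand a : Init a -> init_cand ov n A S a.
Proof. by move=> [E [EI _ Ea]]; exact: EI. Qed.

Lemma Init_sub_R_S a : Init a -> R_S Init a.
Proof.
move=> [E [EI admE Ea]]; have [aA [Sa nSa]] := EI a Ea.
split; first by split=> //; split=> // s sa; apply: Sa; left.
by apply: sub_defends (admE.2 a Ea) => x Ex; exists E.
Qed.

Local Notation stage k := (iter k R_S Init).

Definition Arg_omega (a : argument T) : Prop := exists k, stage k a.

Lemma stage_mono i j a : i <= j -> stage i a -> stage j a.
Proof. exact: (iter_mono R_S_sub Init_sub_R_S). Qed.

Lemma stage_sub_A k a : stage k a -> a \in A.
Proof.
case: k => [/Init_sub_init_cand [] //|k].
by rewrite iterS => -[[]].
Qed.

Lemma stage_conflict_free k : compatible ov S -> conflict_free (stage k).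
Proof.
move=> compS; elim: k => [|k IH].
  by move=> a b /Init_sub_init_cand Ha /Init_sub_init_cand Hb;
    exact: init_cand_conflict_free.
by rewrite iterS; apply: conflict_free_R_S => //; exact: stage_sub_A.
Qed.

Lemma Arg_omega_fixpoint a : R_S Arg_omega a <-> Arg_omega a.
Proof.
split=> [[Sa Da]|[k ka]].
  have [k Dk] := defends_chain_union stage_mono Da.
  by exists k.+1; rewrite iterS; split.
have := stage_mono (leqnSn k) ka; rewrite iterS.
by apply: R_S_sub => x kx; exists k.
Qed.

Lemma Arg_wE a : Arg_w ov n A S a <-> Arg_omega a.
Proof.
split=> [|[k ka] E IE fixE].
  by apply; [move=> b Ib; exists 0|exact: Arg_omega_fixpoint].
elim: k a ka => [|k IH] a; first exact: IE.
by rewrite iterS => ka; apply/fixE; apply: R_S_sub ka => x /IH.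
Qed.

End Sentences.

End SBAF.

Theorem mainTheorem8 (T : choiceType) (ov : T -> T -> Prop)
  (n : argument T -> option T) (A : {fset argument T})
  (supp : argument T -> argument T -> Prop) (S : T -> Prop) :
  is_language ov n ->
  (forall a, a \in A -> is_argument a) ->
  (forall s, S s -> in_SentA A s) ->
  compatible ov S ->
  admissible ov n A (Arg_w ov n A S).
Proof.
move=> _ _ _ compS; split.
  move=> a b /Arg_wE wa /Arg_wE wb.
  apply: conflict_free_chain_union wa wb => [i j x|k]; first exact: stage_mono.
  exact: stage_conflict_free.
move=> a /Arg_wE /Arg_omega_fixpoint [_ Da].
by apply: sub_defends Da => x /Arg_wE.
Qed.
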